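(* Let $f=(A,B,C)$ and $f'=(A',B',C')$ be two partially reduced imaginary or unusual binary quadratic forms over $\mathbb{F}_q[t]$ of the same discriminant. Then: (1) if $|A|<|C|$ and $|A'|<|C'|$, then $f$ and $f'$ are equivalent if and only if $f=f'$; (2) if $|A|<|C|$ and $|A'|=|C'|$, then $f$ and $f'$ are not equivalent; (3) if $|A|=|C|$ and $|A'|=|C'|$, then $f'=f\circ M$ with $M\in GL_2(\mathbb{F}_q[t])$ if and only if $M=\begin{pmatrix}\alpha&\beta\\ 4u\beta/h& u\alpha\end{pmatrix}$ with $\alpha,\beta\in\mathbb{F}_q$, $\alpha^2-(4/h)\beta^2=1$, and $u=\det M=\pm1$, where, if $B'\neq0$, $u$ is determined by the condition $\mathrm{sgn}(B')\in S$.
   Context: $\mathbb{F}_q$ is a finite field with $\gcd(q,6)=1$. For nonzero $H\in\mathbb{F}_q[t]$, $|H|=q^{\deg H}$, $|0|=0$, and $\mathrm{sgn}(H)$ is its leading coefficient. A binary quadratic form $f=(A,B,C)$ is $Ax^2+Bxy+Cy^2$ over $\mathbb{F}_q[t]$ with discriminant $D=B^2-4AC$; $(f\circ M)(x,y)=f(\alpha x+\beta y,\gamma x+\delta y)$ for $M=\begin{pmatrix}\alpha&\beta\\ \gamma&\delta\end{pmatrix}$; $GL_2(\mathbb{F}_q[t])$ is the set of such $M$ with entries in $\mathbb{F}_q[t]$ and $\det M\in\mathbb{F}_q^*$; $f,g$ are equivalent if $g=f\circ M$ for some $M\in GL_2(\mathbb{F}_q[t])$. $D$ is imaginary if $\deg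 D$ is odd, unusual if $\deg D$ is even and $\mathrm{sgn}(D)$ is a non-square in $\mathbb{F}_q^*$. Fix a primitive root $h$ of $\mathbb{F}_q^*$, $S=\{h^i:0\le i\le(q-3)/2\}$. Standing assumptions: forms are primitive, irreducible, $D\notin\mathbb{F}_q$, and $\mathrm{sgn}(D)\in\{1,h\}$. A form $(A,B,C)$ is partially reduced if $|B|<|A|\le|C|$; if $|A|<|C|$ then $\mathrm{sgn}(A)\in\{1,h\}$, and if $|A|=|C|$ then $\mathrm{sgn}(A)=1$; and $B\ne0$ implies $\mathrm{sgn}(B)\in S$. *)

From HB Require Import structures.
From mathcomp Require Import all_boot all_order all_algebra all_field.
Set Implicit Arguments. Unset Strict Implicit. Unset Printing Implicit Defensive.
Import Order.TTheory GRing.Theory Num.Theory.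
Local Open Scope ring_scope.

Section Forms.
Variable F : finFieldType.

(* A binary quadratic form (A,B,C) = A x^2 + B x y + C y^2 over F_q[t]. *)
Definition qform := ({poly F} * {poly F} * {poly F})%type.
Definition fA (f : qform) := f.1.1.
Definition fB (f : qform) := f.1.2.
Definition fC (f : qform) := f.2.

Definition absq (H : {poly F}) : nat :=
  if H == 0 then 0%N else (#|F| ^ (size H).-1)%N.

Definition sgn (H : {poly F}) : F := lead_coef H.

Definition disc (f : qform) : {poly F} := fB f ^+ 2 - 4%:R * fA f * fC f.

(* (f o M)(x,y) = f(alpha x + beta y, gamma x + delta y), coefficients written out *)
Definition compose (f : qform) (M : 'M[{poly F}]_2) : qform :=
  let a := M ord0 ord0 in let b := M ord0 ord_max in
  let c := M ord_max ord0 in let d := M ord_max ord_max in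
  let A := fA f in let B := fB f in let C := fC f in
  (A * a ^+ 2 + B * a * c + C * c ^+ 2,
   2%:R * A * a * b + B * (a * d + b * c) + 2%:R * C * c * d,
   A * b ^+ 2 + B * b * d + C * d ^+ 2).

Definition inGL2 (M : 'M[{poly F}]_2) : Prop :=
  exists c : F, c != 0 /\ \det M = c%:P.

Definition equivalent (f g : qform) : Prop :=
  exists M, inGL2 M /\ g = compose f M.

Definition mx2 (a b c d : {poly F}) : 'M[{poly F}]_2 :=
  \matrix_(i < 2, j < 2)
    if (i : nat) == 0%N then (if (j : nat) == 0%N then a else b)
    else (if (j : nat) == 0%N then c else d).

Definition primitive (f : qform) : Prop := coprimep (gcdp (fA f) (fB f)) (fC f).

(* irreducible: does not factor as a product of two linear forms over F_q[t] *)
Definition irreducible_form (f : qform) : Prop :=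
  ~ exists a b c d : {poly F},
      fA f = a * c /\ fB f = a * d + b * c /\ fC f = b * d.

Definition is_square (x : F) : Prop := exists y : F, y ^+ 2 = x.

Definition imaginary (D : {poly F}) : Prop := odd (size D).-1.
Definition unusual (D : {poly F}) : Prop :=
  ~~ odd (size D).-1 /\ sgn D != 0 /\ ~ is_square (sgn D).

Definition primitive_root_F (h : F) : Prop := (#|F|.-1).-primitive_root h.

Definition inS (h x : F) : Prop :=
  exists i : nat, (i <= (#|F| - 3)./2)%N /\ x = h ^+ i.

Definition standing (h : F) (f : qform) : Prop :=
  primitive f /\ irreducible_form f /\ (~ exists c : F, disc f = c%:P) /\
  (sgn (disc f) = 1 \/ sgn (disc f) = h).

Definition partially_reduced (h : F) (f : qform) : Prop :=
  [/\ (absq (fB f) < absq (fA f))%N, (absq (fA f) <= absq (fC f))%N,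
      ((absq (fA f) < absq (fC f))%N -> sgn (fA f) = 1 \/ sgn (fA f) = h),
      (absq (fA f) = absq (fC f) -> sgn (fA f) = 1) &
      (fB f != 0 -> inS h (sgn (fB f)))].

End Forms.

From HB Require Import structures.
From mathcomp Require Import all_boot all_order all_algebra all_field.
From mathcomp Require Import zify ring.
Set Implicit Arguments. Unset Strict Implicit. Unset Printing Implicit Defensive.
Import GRing.Theory.
Local Open Scope ring_scope.

(* Call f = (A,B,C) balanced when |A| = |C|.  For a partially reduced form whose
   discriminant D is imaginary or unusual, the value f(x,y) never cancels:
   deg f(x,y) = max(deg A x^2, deg C y^2) for (x,y) <> 0, since equal degrees with
   cancelling leading terms would make deg D = deg A + deg C even and
   sgn D = -4 sgn(A) sgn(C) a square.  If f' = f o M with M in GL_2, then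
   D' = (det M)^2 D forces (det M)^2 = 1 and deg A + deg C = deg A' + deg C'; applied
   to A' = f(alpha,gamma) and C' = f(beta,delta) this gives gamma = 0 and a constant
   diagonal when f is unbalanced (so deg A' = deg A < deg C <= deg C'), and constant
   entries when both forms are balanced.
   In the first case the normalisations of sgn A (h is not a square) and of sgn B
   (S and -S are disjoint) leave only f' = f; in the balanced case sgn C = -h/4, and
   comparing the coefficients of degree deg A in f o M = f' says that M preserves
   x^2 - (h/4) y^2, which yields the stated parametrisation. *)

Section PolySize.
Variable R : idomainType.
Implicit Types p q x : {poly R}.

Lemma size_mul_sqr p x : p != 0 -> x != 0 ->
  size (p * x ^+ 2) = (size p + ((size x).-1).*2)%N.
Proof.
move=> p0 x0; rewrite size_mul ?expf_neq0 //.
by rewrite -[size (x ^+ 2)]prednK ?size_poly_gt0 ?expf_neq0 // size_exp muln2 addnS.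
Qed.

Lemma size_mul_sqrC p (k : R) : k != 0 ->
  size (p * k%:P ^+ 2) = size p.
Proof. by move=> k0; rewrite -polyC_exp mulrC size_Cmul // expf_neq0. Qed.

Lemma size_mul_sqr_le p x : p != 0 ->
  (size (p * x ^+ 2)%R <= size p)%N = (size x <= 1)%N.
Proof.
move=> p0; case: (eqVneq x 0) => [->|x0]; first by rewrite expr0n mulr0 size_poly0.
by rewrite size_mul_sqr // -!subn1 -addnn; lia.
Qed.

Lemma size_polyD_eqsize p q : size p = size q -> lead_coef p + lead_coef q != 0 ->
  size (p + q) = size p.
Proof.
move=> eq_pq lead_neq0; apply/eqP.
rewrite eqn_leq (leq_trans (size_polyD _ _)) ?eq_pq ?maxnn //.
case: (posnP (size q)) => [->//|q_gt0]; rewrite -(prednK q_gt0) ltnNge.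
apply: contra lead_neq0 => le_pq; rewrite /lead_coef eq_pq -coefD.
by rewrite nth_default.
Qed.

Section ReducedDisc.
Variables A B C : {poly R}.
Hypotheses (two_neq0 : (2%:R : R) != 0) (ltBA : (size B < size A)%N)
  (leAC : (size A <= size C)%N).

Let four_neq0 : (4%:R : R) != 0.
Proof. by rewrite (natrM R 2 2) mulf_neq0. Qed.

Let A_neq0 : A != 0. Proof. by rewrite -size_poly_gt0 (leq_ltn_trans _ ltBA). Qed.
Let C_neq0 : C != 0.
Proof. by rewrite -size_poly_gt0 (leq_trans _ leAC) ?size_poly_gt0. Qed.

Let size_4AC : size (4%:R * A * C) = (size A + size C).-1.
Proof. by rewrite -mulrA -polyC_natr size_Cmul // size_mul. Qed.

Let lt_B2_4AC : (size (B ^+ 2) < size (- (4%:R * A * C)))%N.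
Proof.
rewrite size_polyN size_4AC; have A_gt0 : (0 < size A)%N by rewrite size_poly_gt0.
case: (eqVneq B 0) => [->|B0]; first by rewrite expr0n size_poly0 -subn1; lia.
have sB2 : size (B ^+ 2) = ((size B).-1 * 2).+1.
  by rewrite -size_exp prednK // size_poly_gt0 expf_neq0.
have B_gt0 : (0 < size B)%N by rewrite size_poly_gt0.
rewrite sB2 -!subn1; lia.
Qed.

Lemma size_disc_reduced : size (B ^+ 2 - 4%:R * A * C) = (size A + size C).-1.
Proof. by rewrite addrC size_polyDl // size_polyN size_4AC. Qed.

Lemma lead_coef_disc_reduced :
  lead_coef (B ^+ 2 - 4%:R * A * C) = - 4%:R * lead_coef A * lead_coef C.
Proof.
by rewrite addrC lead_coefDl // lead_coefN !lead_coefM -polyC_natr lead_coefC !mulNr.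
Qed.

End ReducedDisc.
End PolySize.

(* The hypotheses say that M = [[a, b], [c, d]], of determinant u, satisfies
   M^T diag(1, s) M = diag(1, s). *)
Lemma isometry_diag_entries (R : fieldType) (s u a b c d : R) : s != 0 ->
  a ^+ 2 + s * c ^+ 2 = 1 -> a * b + s * c * d = 0 -> b ^+ 2 + s * d ^+ 2 = s ->
  a * d - b * c = u -> u ^+ 2 = 1 ->
  [/\ c = - (u * b) / s, d = u * a & a ^+ 2 + b ^+ 2 / s = 1].
Proof.
move=> s0 e1 e2 e3 det u2.
have cE : c = - (u * b) / s.
  have : s * c + u * b = d * (a * b + s * c * d) - c * (b ^+ 2 + s * d ^+ 2 - s).
    by rewrite -det; ring.
  rewrite e2 e3 subrr !mulr0 subr0 => /eqP; rewrite addr_eq0 => /eqP <-.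
  by rewrite mulrC mulKf.
have dE : d = u * a.
  have : u * a - d = d * (a ^+ 2 + s * c ^+ 2 - 1) - c * (a * b + s * c * d).
    by rewrite -det; ring.
  by rewrite e1 e2 subrr !mulr0 subr0 => /eqP; rewrite subr_eq0 => /eqP.
split=> //; rewrite -e1 cE mulNr sqrrN expr_div_n exprMn u2 mul1r.
by field.
Qed.

Section QuadraticForms.
Variable F : finFieldType.

Lemma qform_eta (g : qform F) : g = (fA g, fB g, fC g).
Proof. by case: g => [[]]. Qed.

Lemma det_mx2 (a b c d : {poly F}) : \det (mx2 a b c d) = a * d - b * c.
Proof.
rewrite (expand_det_row _ ord0) !big_ord_recl big_ord0 addr0 /cofactor !det_mx11.
by rewrite !mxE /= /bump /= expr0 expr1 mul1r mulN1r mulrN.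
Qed.

Lemma mx2_eta (M : 'M[{poly F}]_2) :
  M = mx2 (M ord0 ord0) (M ord0 ord_max) (M ord_max ord0) (M ord_max ord_max).
Proof.
by apply/matrixP => -[[|[|//]] Hi] [[|[|//]] Hj]; rewrite !mxE /=;
  congr (M _ _); apply: val_inj.
Qed.

Lemma disc_compose (f : qform F) (M : 'M[{poly F}]_2) :
  disc (compose f M) = \det M ^+ 2 * disc f.
Proof. by rewrite [in RHS](mx2_eta M) det_mx2 /disc /compose /fA /fB /fC /=; ring. Qed.

Lemma equivalent_refl (f : qform F) : equivalent f f.
Proof.
exists (mx2 1 0 0 1); split.
  by exists 1; rewrite oner_neq0 det_mx2 mulr1 mulr0 subr0.
by case: f => [[A B] C]; rewrite /compose !mxE /fA /fB /fC /=; congr (_, _, _); ring.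
Qed.

End QuadraticForms.

Section AbsoluteValue.
Variable F : finFieldType.
Implicit Types p q : {poly F}.

Lemma ltn_absq p q : (absq p < absq q)%N = (size p < size q)%N.
Proof.
rewrite /absq; have q_gt1 := finNzRing_gt1 F.
case: (eqVneq p 0) => [->|p0]; case: (eqVneq q 0) => [->|q0]; rewrite ?size_poly0.
- by [].
- by rewrite expn_gt0 (ltn_trans _ q_gt1) // size_poly_gt0 q0.
- by rewrite ltn0.
rewrite ltn_exp2l //; move: p0 q0; rewrite -!size_poly_gt0.
by case: (size p) => // m _; case: (size q).
Qed.

Lemma leq_absq p q : (absq p <= absq q)%N = (size p <= size q)%N.
Proof. by rewrite leqNgt ltn_absq -leqNgt. Qed.

Lemma eqn_absq p q : (absq p == absq q) = (size p == size q).
Proof. by rewrite !eqn_leq !leq_absq. Qed.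

Lemma eq_absq p q : absq p = absq q <-> size p = size q.
Proof. by split=> /eqP; [rewrite eqn_absq | rewrite -eqn_absq] => /eqP. Qed.

End AbsoluteValue.

Section FiniteField.
Variable F : finFieldType.

Lemma odd_card_coprime6 : coprime #|F| 6 -> odd #|F|.
Proof. by move=> cop; rewrite -coprimen2; apply: coprime_dvdr cop. Qed.

Lemma two_neq0_coprime6 : coprime #|F| 6 -> (2%:R : F) != 0.
Proof.
move=> cop; apply/negP => /eqP two0.
have char2 : 2%N \in [pchar F] by apply/andP; split => //; apply/eqP.
have [n cardF] : exists n, #|F| = (2 ^ n)%N by eexists; exact: card_pprimeChar char2.
have n_gt0 : (0 < n)%N.
  by case: n cardF => // cardF; have := finNzRing_gt1 F; rewrite cardF.
by move: cop; rewrite cardF coprime_pexpl.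
Qed.

Variable h : F.
Hypothesis h_prim : primitive_root_F h.

Lemma primroot_neq0 : h != 0.
Proof.
have q_gt1 := finNzRing_gt1 F.
apply/eqP => h0; move: (prim_expr_order h_prim); rewrite h0 expr0n -subn1 subn_eq0.
by rewrite leqNgt q_gt1 => /eqP; rewrite eq_sym oner_eq0.
Qed.

Lemma primroot_nonsquare : coprime #|F| 6 -> ~ is_square h.
Proof.
move=> cop [y hy]; have q_gt1 := finNzRing_gt1 F.
have q_odd := odd_card_coprime6 cop.
set m := (#|F|.-1)./2.
have q_even : ~~ odd #|F|.-1 by rewrite -subn1 oddB ?q_odd // ltnW.
have qE : #|F|.-1 = (2 * m)%N by rewrite -[LHS]odd_double_half (negbTE q_even) mul2n.
have y_neq0 : y != 0 by apply: contraNneq primroot_neq0 => y0; rewrite -hy y0 expr0n.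
have y_card : y ^+ #|F|.-1 = 1.
  apply: (mulIf y_neq0); rewrite mul1r -exprSr prednK ?expf_card //; exact: ltnW.
have := prim_order_dvd h_prim m; rewrite -hy -exprM -qE y_card eqxx => /dvdn_leq.
have m_gt0 : (0 < m)%N by move: qE q_gt1 q_odd; case: #|F| => [|[|[|q]]] //=; lia.
by move/(_ m_gt0); lia.
Qed.

Lemma inS_opp x : coprime #|F| 6 -> x != 0 -> inS h x -> ~ inS h (- x).
Proof.
move=> cop x0 [i [le_i xE]] [j [le_j xNE]].
have lt_ij : (2 * i < #|F|.-1)%N /\ (2 * j < #|F|.-1)%N.
  have q_gt1 : (1 < #|F|)%N by exact: finNzRing_gt1.
  by move: le_i le_j; rewrite -!divn2 -subn1; lia.
have ij : i = j.
  have : h ^+ (2 * i) == h ^+ (2 * j) by rewrite !(mulnC 2) !exprM -xE -xNE sqrrN.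
  rewrite (eq_prim_root_expr h_prim) !modn_small; try by case: lt_ij.
  by rewrite eqn_mul2l => /eqP.
move: xNE; rewrite -ij -xE => /eqP; rewrite eq_sym -addr_eq0 -mulr2n -mulr_natl.
by rewrite mulf_eq0 (negbTE (two_neq0_coprime6 cop)) (negbTE x0).
Qed.

Lemma sqr_eq1_normalized (x s s' : F) : coprime #|F| 6 ->
  (s = 1 \/ s = h) -> (s' = 1 \/ s' = h) -> s' = x ^+ 2 * s -> x ^+ 2 = 1.
Proof.
move=> cop [->|->] [->|->] e.
- by rewrite e mulr1.
- by case: (primroot_nonsquare cop); exists x; rewrite e mulr1.
- have x_neq0 : x != 0 by apply: contra_eq_neq e => ->; rewrite expr0n mul0r oner_eq0.
  case: (primroot_nonsquare cop); exists x^-1.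
  by rewrite exprVn -[h](mulKf (expf_neq0 2 x_neq0)) -e mulr1.
- by apply: (mulIf primroot_neq0); rewrite -e mul1r.
Qed.

End FiniteField.

Section ReducedForm.
Variables (F : finFieldType) (h : F) (g : qform F).
Hypotheses (two_neq0 : (2%:R : F) != 0) (g_red : partially_reduced h g)
  (g_disc : imaginary (disc g) \/ unusual (disc g)).
Local Notation A := (fA g).
Local Notation B := (fB g).
Local Notation C := (fC g).

Lemma size_reduced : (size B < size A)%N /\ (size A <= size C)%N.
Proof. by case: g_red => ltBA leAC _ _ _; rewrite -ltn_absq -leq_absq. Qed.

Lemma sgn_unbalanced : (size A < size C)%N -> sgn A = 1 \/ sgn A = h.
Proof. by case: g_red => _ _ sgA _ _; rewrite -ltn_absq. Qed.

Lemma lead_coef_balanced : size A = size C -> lead_coef A = 1.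
Proof. by case: g_red => _ _ _ sgA _ /eq_absq. Qed.

Lemma inS_sgnB : B != 0 -> inS h (sgn B).
Proof. by case: g_red. Qed.

Let ltBA : (size B < size A)%N. Proof. by case: size_reduced. Qed.
Let leAC : (size A <= size C)%N. Proof. by case: size_reduced. Qed.
Let A_gt0 : (0 < size A)%N. Proof. exact: leq_ltn_trans ltBA. Qed.
Let C_gt0 : (0 < size C)%N. Proof. exact: leq_trans leAC. Qed.

Lemma size_disc_form : size (disc g) = (size A + size C).-1.
Proof. exact: size_disc_reduced. Qed.

Lemma no_leading_cancellation x y : x != 0 -> y != 0 ->
  size (A * x ^+ 2) = size (C * y ^+ 2) ->
  lead_coef (A * x ^+ 2) + lead_coef (C * y ^+ 2) != 0.
Proof.
have [A0 C0] : A != 0 /\ C != 0 by rewrite -!size_poly_gt0.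
move=> x0 y0; rewrite !size_mul_sqr // => eq_size.
case: g_disc => [|[_ [_ nsq]]].
  rewrite /imaginary size_disc_form.
  suff -> : ((size A + size C).-1.-1 = ((size C).-1 + (size y).-1 - (size x).-1).*2)%N.
    by rewrite odd_double.
  move: eq_size A_gt0 leAC; rewrite -!subn1 -!addnn.
  (* [set] identifies sizes that differ only in inferred structure instances, which [lia]
     would otherwise treat as unrelated atoms. *)
  set sA := size A; set sC := size C; set sx := size x; set sy := size y; lia.
have lx0 : lead_coef x != 0 by rewrite lead_coef_eq0.
apply/negP; rewrite !lead_coefM -!expr2 addr_eq0 => /eqP cancel.
apply: nsq; rewrite /sgn /disc lead_coef_disc_reduced //.
have -> : lead_coef A = - (lead_coef C * lead_coef y ^+ 2) / lead_coef x ^+ 2.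
  by rewrite -cancel mulfK // expf_neq0.
by exists (2%:R * lead_coef C * lead_coef y / lead_coef x); field.
Qed.

Lemma size_form_value x y : (x != 0) || (y != 0) ->
  size (A * x ^+ 2 + B * x * y + C * y ^+ 2) =
  maxn (size (A * x ^+ 2)) (size (C * y ^+ 2)).
Proof.
have [A0 C0] : A != 0 /\ C != 0 by rewrite -!size_poly_gt0.
case: (eqVneq x 0) => [-> _|x0 _].
  by rewrite expr0n /= !(mulr0, mul0r, add0r) size_poly0 max0n.
case: (eqVneq y 0) => [->|y0].
  by rewrite expr0n /= !(mulr0, mul0r, addr0) size_poly0 maxn0.
have size_outer : size (A * x ^+ 2 + C * y ^+ 2) =
    maxn (size (A * x ^+ 2)) (size (C * y ^+ 2)).
  case: (ltngtP (size (A * x ^+ 2)) (size (C * y ^+ 2))) => [lt|gt|eq].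
  - by rewrite addrC size_polyDl // (maxn_idPr (ltnW lt)).
  - by rewrite size_polyDl // (maxn_idPl (ltnW gt)).
  - by rewrite size_polyD_eqsize ?no_leading_cancellation // eq maxnn.
have lt_middle : (size (B * x * y)%R < maxn (size (A * x ^+ 2)%R) (size (C * y ^+ 2)%R))%N.
  case: (eqVneq B 0) => [->|B0].
    by rewrite !mul0r size_poly0 leq_max size_poly_gt0 mulf_neq0 ?expf_neq0.
  have := size_polyMleq (B * x) y; have := size_polyMleq B x.
  have [Bp xp yp] : [/\ 0 < size B, 0 < size x & 0 < size y]%N by rewrite !size_poly_gt0.
  move: ltBA leAC; rewrite !size_mul_sqr // -!subn1 -!addnn.
  set sA := size A; set sB := size B; set sC := size C; set sx := size x; set sy := size y.
  by set sBx := size (B * x); lia.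
by rewrite -addrA [B * x * y + _]addrC addrA size_polyDl ?size_outer.
Qed.

Lemma lead_coefC_balanced : (sgn (disc g) = 1 \/ sgn (disc g) = h) ->
  size A = size C -> lead_coef C = - h / 4%:R.
Proof.
move=> sgD eqAC; have four_neq0 : (4%:R : F) != 0 by rewrite (natrM F 2 2) mulf_neq0.
have <- : - 4%:R * lead_coef A * lead_coef C = h.
  rewrite -(@lead_coef_disc_reduced _ A B C) //.
  case: g_disc => [|[_ [_ nsq]]].
    rewrite /imaginary size_disc_form eqAC.
    suff -> : ((size C + size C).-1.-1 = ((size C).-1).*2)%N by rewrite odd_double.
    by move: C_gt0; rewrite -!subn1 -addnn; lia.
  case: sgD => // sgD1; case: nsq; rewrite sgD1; exists 1; exact: expr1n.
by rewrite lead_coef_balanced //; field.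
Qed.

End ReducedForm.

Section Transformation.
Variables (F : finFieldType) (h : F) (f f' : qform F) (M : 'M[{poly F}]_2) (u : F).
Hypotheses (F_coprime6 : coprime #|F| 6) (h_prim : primitive_root_F h)
  (f_red : partially_reduced h f) (f'_red : partially_reduced h f')
  (f_disc : imaginary (disc f) \/ unusual (disc f))
  (f'_disc : imaginary (disc f') \/ unusual (disc f'))
  (f_sgn : sgn (disc f) = 1 \/ sgn (disc f) = h) (eq_disc : disc f = disc f')
  (detM : \det M = u%:P) (f'E : f' = compose f M).

Local Notation A := (fA f).
Local Notation B := (fB f).
Local Notation C := (fC f).
Local Notation A' := (fA f').
Local Notation B' := (fB f').
Local Notation C' := (fC f').
Local Notation a := (M ord0 ord0).
Local Notation b := (M ord0 ord_max).
Local Notation c := (M ord_max ord0).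
Local Notation d := (M ord_max ord_max).

Let two_neq0 : (2%:R : F) != 0 := two_neq0_coprime6 F_coprime6.
Let ltBA : (size B < size A)%N := proj1 (size_reduced f_red).
Let leAC : (size A <= size C)%N := proj2 (size_reduced f_red).
Let ltB'A' : (size B' < size A')%N := proj1 (size_reduced f'_red).
Let leA'C' : (size A' <= size C')%N := proj2 (size_reduced f'_red).
Let A_neq0 : A != 0. Proof. by rewrite -size_poly_gt0 (leq_ltn_trans _ ltBA). Qed.
Let C_neq0 : C != 0.
Proof. by rewrite -size_poly_gt0 (leq_trans _ leAC) // (leq_ltn_trans _ ltBA). Qed.

Let A'E : A' = A * a ^+ 2 + B * a * c + C * c ^+ 2. Proof. by rewrite f'E. Qed.
Let B'E : B' = 2%:R * A * a * b + B * (a * d + b * c) + 2%:R * C * c * d.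
Proof. by rewrite f'E. Qed.
Let C'E : C' = A * b ^+ 2 + B * b * d + C * d ^+ 2. Proof. by rewrite f'E. Qed.
Let detE : a * d - b * c = u%:P. Proof. by rewrite -detM [in RHS](mx2_eta M) det_mx2. Qed.

Lemma det_sqr_eq1 : u ^+ 2 = 1.
Proof.
have disc_neq0 : disc f != 0.
  rewrite -size_poly_gt0 (size_disc_form two_neq0 f_red) ltn_predRL.
  by apply: (@leq_add 1 1); rewrite size_poly_gt0.
apply: polyC_inj; apply: (mulIf disc_neq0).
by rewrite polyC_exp polyC1 mul1r -detM -disc_compose -f'E eq_disc.
Qed.

Let u_neq0 : u != 0.
Proof.
apply/eqP => u0; move: det_sqr_eq1; rewrite u0 expr0n /= => /eqP.
by rewrite eq_sym oner_eq0.
Qed.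

Lemma size_transform_sum : (size A + size C = size A' + size C')%N.
Proof.
have := size_disc_form two_neq0 f_red; rewrite eq_disc (size_disc_form two_neq0 f'_red).
move: ltBA leAC ltB'A' leA'C'; rewrite -!subn1.
set sA := size A; set sB := size B; set sC := size C.
by set sA' := size A'; set sB' := size B'; set sC' := size C'; lia.
Qed.

Lemma size_transformA : size A' = maxn (size (A * a ^+ 2)) (size (C * c ^+ 2)).
Proof.
rewrite A'E (size_form_value two_neq0 f_red f_disc) //.
rewrite -negb_and; apply/negP => /andP [/eqP a0 /eqP c0].
move: detE; rewrite a0 c0 mul0r mulr0 subr0 => /esym/eqP.
by rewrite polyC_eq0 (negbTE u_neq0).
Qed.

Lemma size_transformC : size C' = maxn (size (A * b ^+ 2)) (size (C * d ^+ 2)).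
Proof.
rewrite C'E (size_form_value two_neq0 f_red f_disc) //.
rewrite -negb_and; apply/negP => /andP [/eqP b0 /eqP d0].
move: detE; rewrite b0 d0 mul0r mulr0 subr0 => /esym/eqP.
by rewrite polyC_eq0 (negbTE u_neq0).
Qed.

Lemma lower_left_eq0 : (size A < size C)%N -> c = 0.
Proof.
move=> ltAC; apply/eqP; apply: contraTT ltAC => c_neq0; rewrite -leqNgt.
have leC : (size C <= size (C * c ^+ 2)%R)%N by rewrite size_mul_sqr ?leq_addr.
move: leC size_transformA size_transform_sum leA'C'.
set sA := size A; set sC := size C; set sA' := size A'; set sC' := size C'.
by set sAa := size (A * a ^+ 2); set sCc := size (C * c ^+ 2); lia.
Qed.

Lemma transform_unbalanced_diag : (size A < size C)%N ->
  exists a0 d0 : F, [/\ c = 0, a = a0%:P, d = d0%:P & a0 * d0 = u].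
Proof.
move=> ltAC; have c0 := lower_left_eq0 ltAC.
have ad : a * d = u%:P by rewrite -detE c0 mulr0 subr0.
have /andP [/eqP a1 /eqP d1] : (size a == 1%N) && (size d == 1%N).
  by rewrite -size_mul_eq1 ad size_polyC u_neq0.
exists a`_0, d`_0; rewrite -!size1_polyC ?a1 ?d1 //; split=> //.
by apply: polyC_inj; rewrite polyCM -!size1_polyC ?a1 ?d1.
Qed.

Lemma transform_unbalanced_trivial :
  (size A < size C)%N -> (size A' < size C')%N -> f = f'.
Proof.
move=> ltAC ltA'C'.
have [a0 [d0 [c0 aE dE ad]]] := transform_unbalanced_diag ltAC.
have a0_neq0 : a0 != 0 by apply: contraNneq u_neq0 => a00; rewrite -ad a00 mul0r.
have A'_scale : A' = a0 ^+ 2 *: A.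
  by rewrite A'E c0 aE expr0n /= !mulr0 !addr0 -polyC_exp mulrC mul_polyC.
have a0_sq : a0 ^+ 2 = 1.
  apply: (sqr_eq1_normalized h_prim F_coprime6 (sgn_unbalanced f_red ltAC)
    (sgn_unbalanced f'_red ltA'C')).
  by rewrite /sgn A'_scale lead_coefZ.
have A'_eq : A' = A by rewrite A'_scale a0_sq scale1r.
have b0 : b = 0.
  apply/eqP; apply: contraTT ltB'A' => b_neq0; rewrite -leqNgt.
  have k_neq0 : 2%:R * a0 != 0 by rewrite mulf_neq0.
  have B'_sum : B' = (2%:R * a0) *: A * b + B * (a0 * d0)%:P.
    by rewrite B'E c0 aE dE -mul_polyC !polyCM polyC_natr; ring.
  have le_head : (size A <= size ((2%:R * a0) *: A * b)%R)%N.
    have kA_neq0 : (2%:R * a0) *: A != 0 by rewrite scaler_eq0 negb_or k_neq0 A_neq0.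
    rewrite size_mul // size_scale //.
    by rewrite -subn1 -addnBA ?leq_addr // size_poly_gt0.
  have lt_tail : (size (B * (a0 * d0)%:P)%R < size ((2%:R * a0) *: A * b)%R)%N.
    by rewrite mulrC size_Cmul ?ad //; apply: leq_trans le_head.
  by rewrite B'_sum size_polyDl // A'_eq.
have d0_sq : d0 ^+ 2 = 1 by move: det_sqr_eq1; rewrite -ad exprMn a0_sq mul1r.
have C'_eq : C' = C.
  by rewrite C'E b0 dE expr0n /= !mulr0 !mul0r !add0r -polyC_exp d0_sq mulr1.
have B'_eq : B' = u *: B.
  by rewrite B'E b0 c0 !(mulr0, mul0r, addr0, add0r) aE dE -polyCM ad mulrC mul_polyC.
rewrite [f']qform_eta [f]qform_eta A'_eq C'_eq B'_eq.
move/eqP: det_sqr_eq1; rewrite sqrf_eq1 => /orP [/eqP -> | /eqP u_m1].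
  by rewrite scale1r.
case: (eqVneq B 0) => [-> | B_neq0]; first by rewrite scaler0.
have B'_neq0 : B' != 0 by rewrite B'_eq u_m1 scaleN1r oppr_eq0.
have := inS_sgnB f'_red B'_neq0; rewrite B'_eq u_m1 scaleN1r /sgn lead_coefN.
by move/(inS_opp h_prim F_coprime6 _ (inS_sgnB f_red B_neq0)); rewrite lead_coef_eq0.
Qed.

Lemma transform_unbalanced_preserved : (size A < size C)%N -> size A' <> size C'.
Proof.
move=> ltAC eqA'C'.
have [a0 [d0 [c0 aE dE ad]]] := transform_unbalanced_diag ltAC.
have /norP [a0_neq0 d0_neq0] : ~~ ((a0 == 0) || (d0 == 0)) by rewrite -mulf_eq0 ad.
have sA' : size A' = size A.
  by rewrite size_transformA c0 aE expr0n /= mulr0 size_poly0 maxn0 size_mul_sqrC.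
have sC' : (size C <= size C')%N by rewrite size_transformC dE size_mul_sqrC // leq_maxr.
by move: ltAC; rewrite -sA' eqA'C' ltnNge sC'.
Qed.

Let size_balanced : size A = size C -> size A' = size C' -> size A' = size A.
Proof. by move=> eqAC eqA'C'; move: size_transform_sum; rewrite eqAC eqA'C'; lia. Qed.

Lemma transform_balanced_const : size A = size C -> size A' = size C' ->
  [/\ a = (a`_0)%:P, b = (b`_0)%:P, c = (c`_0)%:P & d = (d`_0)%:P].
Proof.
move=> eqAC eqA'C'; have eqA'A := size_balanced eqAC eqA'C'.
have := leq_maxl (size (A * a ^+ 2)) (size (C * c ^+ 2)).
rewrite -size_transformA eqA'A size_mul_sqr_le // => /size1_polyC aE.
have := leq_maxr (size (A * a ^+ 2)) (size (C * c ^+ 2)).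
rewrite -size_transformA eqA'A eqAC size_mul_sqr_le // => /size1_polyC cE.
have := leq_maxl (size (A * b ^+ 2)) (size (C * d ^+ 2)).
rewrite -size_transformC -eqA'C' eqA'A size_mul_sqr_le // => /size1_polyC bE.
have := leq_maxr (size (A * b ^+ 2)) (size (C * d ^+ 2)).
by rewrite -size_transformC -eqA'C' eqA'A eqAC size_mul_sqr_le // => /size1_polyC dE.
Qed.

(* Coefficients of degree deg A = deg A' of f o M = f': there A and A' are monic, B and B'
   vanish, and C and C' both have leading coefficient -h/4. *)
Lemma transform_balanced_relations : size A = size C -> size A' = size C' ->
  let s := lead_coef C in
  [/\ a`_0 ^+ 2 + s * c`_0 ^+ 2 = 1, a`_0 * b`_0 + s * c`_0 * d`_0 = 0
    & b`_0 ^+ 2 + s * d`_0 ^+ 2 = s].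
Proof.
move=> eqAC eqA'C' s; have eqA'A := size_balanced eqAC eqA'C'.
have [aE bE cE dE] := transform_balanced_const eqAC eqA'C'.
set a0 := a`_0 in aE *; set b0 := b`_0 in bE *; set c0 := c`_0 in cE *.
set d0 := d`_0 in dE *.
have f'_sgn : sgn (disc f') = 1 \/ sgn (disc f') = h by rewrite -eq_disc.
have sE' : lead_coef C' = s.
  by rewrite /s (lead_coefC_balanced two_neq0 f'_red f'_disc f'_sgn eqA'C')
                (lead_coefC_balanced two_neq0 f_red f_disc f_sgn eqAC).
set n := (size A).-1.
have coefA : A`_n = 1 := lead_coef_balanced f_red eqAC.
have coefB : B`_n = 0 by apply: nth_default; rewrite -ltnS (ltn_predK ltBA).
have coefC : C`_n = s by rewrite /s /lead_coef -eqAC.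
have coefA' : A'`_n = 1 by rewrite /n -eqA'A; exact: lead_coef_balanced f'_red eqA'C'.
have coefB' : B'`_n = 0.
  by apply: nth_default; rewrite /n -eqA'A -ltnS (ltn_predK ltB'A').
have coefC' : C'`_n = s by rewrite /n -eqA'A eqA'C' -sE'.
split.
- move: (congr1 (fun p : {poly F} => p`_n) A'E).
  rewrite /= aE cE !coefD -!polyC_exp !coefMC coefA coefB coefC coefA' => e.
  by rewrite [RHS]e; ring.
- move: (congr1 (fun p : {poly F} => p`_n) B'E); rewrite /= aE bE cE dE -!polyCM -polyCD.
  rewrite !coefD !coefMC -!polyC_natr !coefCM coefA coefB coefC coefB' => e.
  by apply: (mulfI two_neq0); rewrite mulr0 [RHS]e; ring.
- move: (congr1 (fun p : {poly F} => p`_n) C'E).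
  rewrite /= bE dE !coefD -!polyC_exp !coefMC coefA coefB coefC coefC' => e.
  by rewrite [RHS]e; ring.
Qed.

Lemma transform_balanced_orthogonal : size A = size C -> size A' = size C' ->
  exists alpha beta : F,
    M = mx2 alpha%:P beta%:P (4%:R * u * beta / h)%:P (u * alpha)%:P /\
    alpha ^+ 2 - (4%:R / h) * beta ^+ 2 = 1.
Proof.
move=> eqAC eqA'C'.
have [aE bE cE dE] := transform_balanced_const eqAC eqA'C'.
have [E1 E2 E3] := transform_balanced_relations eqAC eqA'C'.
have sE := lead_coefC_balanced two_neq0 f_red f_disc f_sgn eqAC.
have det0 : a`_0 * d`_0 - b`_0 * c`_0 = u.
  by apply: polyC_inj; rewrite polyCB !polyCM -aE -bE -cE -dE detE.
set a0 := a`_0 in aE E1 E2 E3 det0; set b0 := b`_0 in bE E1 E2 E3 det0.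
set c0 := c`_0 in cE E1 E2 E3 det0; set d0 := d`_0 in dE E1 E2 E3 det0.
have s_neq0 : lead_coef C != 0 by rewrite lead_coef_eq0.
have [cE' dE' ortho] := isometry_diag_entries s_neq0 E1 E2 E3 det0 det_sqr_eq1.
have h_neq0 := primroot_neq0 h_prim.
have four_neq0 : (4%:R : F) != 0 by rewrite (natrM F 2 2) mulf_neq0.
exists a0, b0; split.
  rewrite [M]mx2_eta aE bE cE dE cE' dE' sE; congr (mx2 _ _ _%:P _); field.
  by rewrite oppr_eq0 h_neq0 four_neq0.
by apply: etrans _ ortho; rewrite sE; field; rewrite oppr_eq0 h_neq0 four_neq0.
Qed.

End Transformation.

Unset Implicit Arguments.

Theorem mainTheorem4 (F : finFieldType) (h : F) (f f' : qform F) :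
  coprime #|F| 6 ->
  primitive_root_F h ->
  standing h f -> standing h f' ->
  partially_reduced h f -> partially_reduced h f' ->
  (imaginary (disc f) \/ unusual (disc f)) ->
  (imaginary (disc f') \/ unusual (disc f')) ->
  disc f = disc f' ->
  [/\
   ((absq (fA f) < absq (fC f))%N -> (absq (fA f') < absq (fC f'))%N ->
      (equivalent f f' <-> f = f')),
   ((absq (fA f) < absq (fC f))%N -> absq (fA f') = absq (fC f') ->
      ~ equivalent f f') &
   (absq (fA f) = absq (fC f) -> absq (fA f') = absq (fC f') ->
      forall M : 'M[{poly F}]_2,
        (inGL2 M /\ f' = compose f M) <->
        (exists alpha beta u : F,
           [/\ M = mx2 alpha%:P beta%:P (4%:R * u * beta / h)%:P (u * alpha)%:P,
               alpha ^+ 2 - (4%:R / h) * beta ^+ 2 = 1,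
               \det M = u%:P,
               (u = 1 \/ u = -1) &
               f' = compose f M]))].
Proof.
move=> cop h_prim [_ [_ [_ f_sgn]]] _ f_red f'_red f_disc f'_disc eq_disc.
split.
- rewrite !ltn_absq => ltAC ltA'C'.
  split=> [[M [[u [_ detM]] f'E]] | <-]; last exact: equivalent_refl.
  exact: transform_unbalanced_trivial cop h_prim f_red f'_red f_disc eq_disc detM f'E
    ltAC ltA'C'.
- rewrite ltn_absq => ltAC /eq_absq eqA'C' [M [[u [_ detM]] f'E]].
  exact: transform_unbalanced_preserved cop f_red f'_red f_disc eq_disc detM f'E
    ltAC eqA'C'.
move=> /eq_absq eqAC /eq_absq eqA'C' M; split.
  move=> [[u [_ detM]] f'E].
  have [alpha [beta [ME ortho]]] := transform_balanced_orthogonal cop h_prim f_red f'_red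
    f_disc f'_disc f_sgn eq_disc detM f'E eqAC eqA'C'.
  exists alpha, beta, u; split=> //.
  move/eqP: (det_sqr_eq1 cop f_red eq_disc detM f'E).
  by rewrite sqrf_eq1 => /orP [] /eqP; [left | right].
move=> [alpha [beta [u [_ _ detM u_pm1 f'E]]]]; split=> //.
by exists u; split=> //; case: u_pm1 => ->; rewrite ?oppr_eq0 oner_eq0.
Qed.
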